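(* Let $\mathcal M\subset \mathcal M_n(\mathbb R)$ be a compact convex set of irreducible Metzler matrices, and let $\lambda(\mathcal M)$ be the real number defined below. Let $v_0:K\to\mathbb R_+$ be a continuous function, homogeneous of degree 1, positive on $K_0$, and define $v(t,x)=\sup_{M\in L^\infty(0,t)} v_0(x_M(t))$. Then for every $x\in K_0$, \[ \lim_{t\to+\infty}\frac1t\log v(t,x)=\lambda(\mathcal M), \] and the convergence is locally uniform on $K_0$.
   Context: A real $n\times n$ matrix $m$ is Metzler if $m_{ij}\ge 0$ for all $i\neq j$; it is irreducible if for every partition $\{1,\dots,n\}=I\sqcup J$ into nonempty sets there exist $i\in I$, $j\in J$ with $m_{ij}>0$. $K$ is the nonnegative orthant of $\mathbb R^n$, $K_0=K\setminus\{0\}$. For $t>0$, $L^\infty(0,t)$ denotes the set of measurable controls $M:[0,t]\to\mathcal M$, and $x_M$ is the solution of $\dot x_M(s)=M(s)x_M(s)$, $x_M(0)=x$. $\lambda(\mathcal M)$ is the (unique) real number for which there exists a function $\overline v:K\to\mathbb R_+$, homogeneous of degree 1, positive on $K_0$ and globally Lipschitz, such that $e^{\lambda(\mathcal M)t}\overline v(x)=\sup_{M\in L^\infty(0,t)}\overline v(x_M(t))$ for all $t\ge0$, $x\in K$. *)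

From HB Require Import structures.
From mathcomp Require Import all_boot all_order all_algebra.
From mathcomp Require Import all_classical all_reals all_analysis.
Set Implicit Arguments. Unset Strict Implicit. Unset Printing Implicit Defensive.
Import Order.TTheory GRing.Theory Num.Theory.
Import numFieldNormedType.Exports.
Local Open Scope classical_set_scope.
Local Open Scope ring_scope.

Definition orthK (R : realType) (n : nat) : set 'cV[R]_n :=
  [set x | forall i, 0 <= x i 0].
Definition orthK0 (R : realType) (n : nat) : set 'cV[R]_n :=
  [set x | orthK x /\ x != 0].

Definition metzler (R : realType) (n : nat) (m : 'M[R]_n) : Prop :=
  forall i j : 'I_n, i != j -> 0 <= m i j.

Definition irreducible_mx (R : realType) (n : nat) (m : 'M[R]_n) : Prop :=
  forall I : {set 'I_n}, I != finset.set0 -> ~: I != finset.set0 ->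
    exists i j, i \in I /\ j \in ~: I /\ 0 < m i j.

Definition convex_mxset (R : realType) (n : nat) (S : set 'M[R]_n) : Prop :=
  forall A B, S A -> S B -> forall a : R, 0 <= a <= 1 ->
    S (a *: A + (1 - a) *: B).

(* A measurable control M : [0,t] -> S (element of L^oo(0,t) with values in S). *)
Definition control (R : realType) (n : nat) (S : set 'M[R]_n) (t : R)
    (M : R -> 'M[R]_n) : Prop :=
  (forall s, 0 <= s <= t -> S (M s)) /\
  (forall i j, measurable_fun `[0, t]%classic (fun s => M s i j)).

(* y is the (Caratheodory) solution on [0,t] of y' = M(s) y, y(0) = x,
   written in integral form. *)
Definition trajectory (R : realType) (n : nat) (M : R -> 'M[R]_n) (t : R)
    (x : 'cV[R]_n) (y : R -> 'cV[R]_n) : Prop :=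
  (forall i, (@lebesgue_measure R).-integrable `[0, t]%classic
              (fun r => ((M r *m y r) i 0)%:E)) /\
  (forall s, 0 <= s <= t -> forall i,
     y s i 0 = x i 0 + \int[@lebesgue_measure R]_(r in `[0, s]%classic)
                         ((M r *m y r) i 0)).

Definition value_fn (R : realType) (n : nat) (S : set 'M[R]_n)
    (w : 'cV[R]_n -> R) (t : R) (x : 'cV[R]_n) : R :=
  sup [set w (y t) | y in
        [set y | exists M, control S t M /\ trajectory M t x y]].

Definition homogeneous1 (R : realType) (n : nat) (w : 'cV[R]_n -> R) : Prop :=
  forall (a : R) x, 0 < a -> orthK x -> w (a *: x) = a * w x.

(* lam is lambda(S): there is a nonnegative, 1-homogeneous, positive on K_0,
   globally Lipschitz eigenfunction vb on K. *)
Definition is_lambda (R : realType) (n : nat) (S : set 'M[R]_n) (lam : R) :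
    Prop :=
  exists vb : 'cV[R]_n -> R,
    [/\ (forall x, orthK x -> 0 <= vb x),
        homogeneous1 vb,
        (forall x, orthK0 x -> 0 < vb x),
        (exists L : R, forall x y, orthK x -> orthK y ->
            `|vb x - vb y| <= L * `|x - y|) &
        (forall t x, 0 <= t -> orthK x ->
            expR (lam * t) * vb x = value_fn S vb t x)].

(* Two continuous 1-homogeneous functions that
   are positive on K_0 are comparable on K (compare their extrema on the compact
   trace of the unit sphere), and K is invariant under the Metzler dynamics, so
   the comparison passes to the suprema:
   [expR (lam * t) * vb x / C2 <= value_fn S v0 t x <= C1 * expR (lam * t) * vb x].
   Taking logarithms, [ln (value_fn S v0 t x) / t - lam] is O(1/t), uniformly
   where [vb] stays between [vb x / 2] and [2 * vb x], which by the Lipschitz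
   bound holds on a ball around any x in K_0.  Convexity, irreducibility and
   nonnegativity of [v0] only matter for the existence of [lam], which is
   assumed. *)

From HB Require Import structures.
From mathcomp Require Import all_boot all_order all_algebra.
From mathcomp Require Import all_classical all_reals all_analysis.
From mathcomp Require Import lra ring.
Set Implicit Arguments. Unset Strict Implicit. Unset Printing Implicit Defensive.
Import Order.TTheory GRing.Theory Num.Theory.
Import numFieldNormedType.Exports.
Local Open Scope classical_set_scope.
Local Open Scope ring_scope.

Local Notation mu := (@lebesgue_measure _).

Lemma integrable_cst_itv (R : realType) (t c : R) :
  mu.-integrable `[0, t] (EFin \o cst c).
Proof.
apply: continuous_compact_integrable; first exact: segment_compact.
by apply: continuous_subspaceT => x; exact: cst_continuous.
Qed.

Lemma Rintegral_increment_ge (R : realType) (f : R -> R) (t a b c : R) :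
  mu.-integrable `[0, t] (EFin \o f) ->
  0 <= a -> a <= b -> b <= t -> (forall p, a < p -> p <= b -> c <= f p) ->
  c * (b - a) <= \int[mu]_(r in `[0, b]) f r - \int[mu]_(r in `[0, a]) f r.
Proof.
move=> itf a0 ab bt hf.
have ib : mu.-integrable `[0, b] (EFin \o f).
  by apply: integrableS itf => //; exact: subset_itvl.
have sub : `]a, b] `<=` `[0, t].
  move=> p /=; rewrite !in_itv /= => /andP[ap pb].
  by apply/andP; split; [exact: le_trans a0 (ltW ap) | exact: le_trans pb bt].
rewrite (@Rintegral_itvB R f (BLeft 0) (BRight b) a ib) //.
have -> : c * (b - a) = \int[mu]_(r in `]a, b]) c.
  rewrite Rintegral_cst //; have := @lebesgue_measure_itv R `]a, b].
  rewrite /= lte_fin => ->.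
  by case: ltgtP ab => // -> _; rewrite subrr mulr0.
apply: le_Rintegral => //.
- exact: integrableS (integrable_cst_itv t c).
- exact: integrableS itf.
- by move=> p /=; rewrite in_itv /= => /andP[]; exact: hf.
Qed.

Lemma mul_ge_Nbound (R : realDomainType) (B m a y : R) :
  `|a| <= B -> 0 <= m -> - m <= y -> 0 <= a \/ y <= 0 -> - (B * m) <= a * y.
Proof.
move=> aB m0 my hay; have B0 : 0 <= B := le_trans (normr_ge0 a) aB.
have [y0|y0] := leP 0 y.
  case: hay => [a0|y_le0]; first by rewrite (@le_trans _ _ 0) ?mulr_ge0 // oppr_le0 mulr_ge0.
  by rewrite (@le_anti _ _ y 0) ?y_le0 ?y0 // mulr0 oppr_le0 mulr_ge0.
have : `|a * y| <= B * m by rewrite normrM ler_pM // ltr0_norm // lerNl.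
by rewrite ler_norml => /andP[].
Qed.

Section OrthantInvariance.
Variables (R : realType) (n : nat) (M : R -> 'M[R]_n) (t B : R)
  (x : 'cV[R]_n) (y : R -> 'cV[R]_n).
Hypothesis B_ge0 : 0 <= B.
Hypothesis M_metzler : forall s, 0 <= s <= t -> metzler (M s).
Hypothesis M_bounded : forall s, 0 <= s <= t -> forall i j, `|M s i j| <= B.
Hypothesis y_traj : trajectory M t x y.
Hypothesis x_orthK : orthK x.

Let f i r := (M r *m y r) i 0.
Let c := n%:R * B.
Let c_ge0 : 0 <= c. Proof. by rewrite mulr_ge0. Qed.

Let yE s i : 0 <= s <= t -> y s i 0 = x i 0 + \int[mu]_(r in `[0, s]) f i r.
Proof. by move=> hs; exact: y_traj.2. Qed.

Let y_increment_ge a b i d : 0 <= a -> a <= b -> b <= t ->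
  (forall p, a < p -> p <= b -> d <= f i p) -> d * (b - a) <= y b i 0 - y a i 0.
Proof.
move=> a0 ab bt hf; have b0 := le_trans a0 ab.
rewrite !yE ?a0 ?b0 ?(le_trans ab bt) ?bt // opprD addrACA subrr add0r.
exact: Rintegral_increment_ge (y_traj.1 i) a0 ab bt hf.
Qed.

Let Y := \sum_j (`|x j 0| + \int[mu]_(r in `[0, t]) `|f j r|).

Let Yj_ge0 j : 0 <= `|x j 0| + \int[mu]_(r in `[0, t]) `|f j r|.
Proof. by rewrite addr_ge0 //; apply: Rintegral_ge0 => *; exact: normr_ge0. Qed.

Let Y_ge0 : 0 <= Y. Proof. exact: sumr_ge0. Qed.

Let y_bounded p j : 0 <= p <= t -> `|y p j 0| <= Y.
Proof.
move=> /[dup] hp /andP[p0 pt].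
have Yj_le : `|x j 0| + \int[mu]_(r in `[0, t]) `|f j r| <= Y.
  by rewrite /Y (bigD1 j) //= lerDl sumr_ge0.
apply: le_trans Yj_le; rewrite yE // (le_trans (ler_normD _ _)) // lerD2l.
rewrite (le_trans (le_normr_Rintegral _ _)) //.
  by apply: integrableS (y_traj.1 j) => //; exact: subset_itvl.
have := Rintegral_increment_ge (c := 0) (integrable_norm (y_traj.1 j)) p0 pt (lexx t).
by rewrite mul0r subr_ge0; apply=> *; exact: normr_ge0.
Qed.

Let f_ge_sum i p d : (forall j, - d <= M p i j * y p j 0) -> - (n%:R * d) <= f i p.
Proof.
move=> hd; have -> : - (n%:R * d) = \sum_(j < n) - d.
  by rewrite sumr_const card_ord mulNrn mulr_natl.
by rewrite /f mxE; exact: ler_sum.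
Qed.

Let f_ge i p : 0 <= p <= t -> - (c * Y) <= f i p.
Proof.
move=> hp; rewrite -mulrA; apply: f_ge_sum => j.
have : `|M p i j * y p j 0| <= B * Y by rewrite normrM ler_pM ?M_bounded ?y_bounded.
by rewrite ler_norml => /andP[].
Qed.

Let f_ge_neg i p m : 0 <= p <= t -> 0 <= m -> (forall j, - m <= y p j 0) ->
  y p i 0 <= 0 -> - (c * m) <= f i p.
Proof.
move=> hp m0 hm yi; rewrite -mulrA; apply: f_ge_sum => j.
apply: mul_ge_Nbound => //; first exact: M_bounded.
have [->|ij] := eqVneq j i; first by right.
by left; apply: M_metzler => //; rewrite eq_sym.
Qed.

Let last_nonneg_time a b i : 0 <= a -> a <= b -> b <= t -> 0 <= y a i 0 ->
  exists2 q, a <= q <= b /\ 0 <= y q i 0 & forall u, q < u -> u <= b -> y u i 0 < 0.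
Proof.
move=> a0 ab bt ya.
pose A := [set r | a <= r <= b /\ 0 <= y r i 0].
have Aa : A a by split; rewrite ?lexx ?ab.
have A_sup : has_sup A by split; [exists a | exists b => r [/andP[]]].
set q := sup A.
have aq : a <= q by exact: sup_upper_bound.
have qb : q <= b by apply: ge_sup => [|r [/andP[]]]; first by exists a.
exists q; last first.
  move=> u qu ub; rewrite ltNge; apply/negP => yu.
  have : u <= q by apply: sup_upper_bound => //; split; rewrite // (le_trans aq (ltW qu)).
  by rewrite leNgt qu.
split; first by rewrite aq qb.
apply/ler_addgt0Pr => e e0; set K := c * Y.
have K_ge0 : 0 <= K by rewrite mulr_ge0.
have [r Ar qr] := sup_adherent (divr_gt0 e0 (ltr_wpDl K_ge0 ltr01)) A_sup.
have [/andP[ar _] yr] := Ar; have rq : r <= q by exact: sup_upper_bound.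
have r0 := le_trans a0 ar.
have f_lb p : r < p -> p <= q -> - K <= f i p.
  by move=> rp pq; apply: f_ge; rewrite (le_trans r0 (ltW rp)) (le_trans pq (le_trans qb bt)).
have := y_increment_ge r0 rq (le_trans qb bt) f_lb.
have : K * (q - r) <= K * (e / (K + 1)) by apply: ler_wpM2l => //; move: qr; rewrite -/q; lra.
have : K * (e / (K + 1)) <= e.
  by rewrite mulrA ler_pdivrMr ?ltr_wpDl // mulrC ler_pM2l // lerDl.
move=> *; lra.
Qed.

Let h := (2 * (c + 1))^-1.
Let h_gt0 : 0 < h. Proof. by rewrite invr_gt0 mulr_gt0 // ltr_wpDl. Qed.
Let ch_le : c * h <= 2^-1.
Proof. by rewrite ler_pdivrMr ?mulr_gt0 ?ltr_wpDl //; lra. Qed.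

Let neg_part_le s0 p j m : 0 <= s0 -> 0 <= y s0 j 0 -> s0 <= p -> p <= t ->
  p <= s0 + h -> 0 <= m -> (forall u k, s0 <= u -> u <= p -> - m <= y u k 0) ->
  - y p j 0 <= c * h * m.
Proof.
move=> s00 ys0 s0p pt ph m0 y_ge_Nm.
have [yp_ge0|yp_lt0] := leP 0 (y p j 0).
  by rewrite (le_trans _ (_ : 0 <= _)) ?oppr_le0 // !mulr_ge0 // ltW.
have [q [/andP[s0q qp] yq] neg] := last_nonneg_time s00 s0p pt ys0.
have q0 := le_trans s00 s0q.
have f_lb u : q < u -> u <= p -> - (c * m) <= f j u.
  move=> qu up; apply: f_ge_neg => //.
  - by rewrite (le_trans q0 (ltW qu)) (le_trans up).
  - by move=> k; apply: y_ge_Nm up; exact: le_trans s0q (ltW qu).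
  - exact: ltW (neg u qu up).
have := y_increment_ge q0 qp pt f_lb.
have : c * m * (p - q) <= c * m * h by apply: ler_wpM2l; rewrite ?mulr_ge0 //; lra.
have -> : c * h * m = c * m * h by ring.
move=> *; lra.
Qed.

(* [m], the largest negative part of [y] on a window of length [h], satisfies
   [m <= c * h * m <= m / 2]. *)
Let window_nonneg s0 : 0 <= s0 -> (forall i, 0 <= y s0 i 0) ->
  forall q i, s0 <= q -> q <= t -> q <= s0 + h -> 0 <= y q i 0.
Proof.
move=> s00 ys0.
pose W p := [/\ s0 <= p, p <= t & p <= s0 + h].
pose N := [set z | z = 0 \/ exists j p, W p /\ z = - y p j 0].
have N_sup : has_sup N.
  split; first by exists 0; left.
  exists Y => z [->|[j [p [[s0p pt _] ->]]]] //.
  by rewrite (le_trans (ler_norm _)) // normrN y_bounded // pt (le_trans s00).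
set m := sup N.
have m_ge0 : 0 <= m by apply: sup_upper_bound => //; left.
have y_ge_Nm j p : W p -> - m <= y p j 0.
  by move=> Wp; rewrite lerNl; apply: sup_upper_bound => //; right; exists j, p.
have m_le : m <= c * h * m.
  apply: ge_sup => [|z [->|[j [p [[s0p pt ph] ->]]]]]; first by exists 0; left.
    by rewrite !mulr_ge0 // ltW.
  apply: (neg_part_le s00 (ys0 j)) => // u k s0u up; apply: y_ge_Nm.
  by split; rewrite // (le_trans up).
have m_le0 : m <= 0 by have := ler_wpM2r m_ge0 ch_le; lra.
move=> q i s0q qt qh; apply: le_trans (y_ge_Nm i q _); first by rewrite oppr_ge0.
by split.
Qed.

Lemma trajectory_orthK s : 0 <= s <= t -> orthK (y s).
Proof.
suff nonneg k q i : 0 <= q <= t -> q <= k%:R * h -> 0 <= y q i 0.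
  move=> hs i; apply: (nonneg (Num.truncn (s / h)).+1) => //.
  by rewrite -ler_pdivrMr // ltW // truncnS_gt.
elim: k q i => [|k IH] q i /andP[q0 qt] qk.
  have -> : q = 0 by apply/eqP; rewrite eq_le q0 -(mul0r h) qk.
  by rewrite yE ?lexx ?(le_trans q0 qt) // set_itv1 Rintegral_set1 addr0.
have [qk'|kq] := leP q (k%:R * h); first by apply: IH; rewrite ?q0 ?qt.
have kh0 : 0 <= k%:R * h by rewrite mulr_ge0 // ltW.
apply: (window_nonneg kh0) => //; first by move=> j; apply: IH; rewrite ?kh0 ?(le_trans (ltW kq) qt).
- exact: ltW.
- by rewrite -natr1 mulrDl mul1r in qk.
Qed.

End OrthantInvariance.

Lemma mx_entry_le_norm (R : realType) m n (A : 'M[R]_(m, n)) i j : `|A i j| <= `|A|.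
Proof.
rewrite [leRHS]/Num.norm /= mx_normrE.
exact: (@le_bigmax _ _ _ 0 (fun ij : 'I_m * 'I_n => `|A ij.1 ij.2|) (i, j)).
Qed.

Lemma compact_mx_entry_bounded (R : realType) n (S : set 'M[R]_n) :
  compact S -> exists2 B, 0 <= B & forall m, S m -> forall i j, `|m i j| <= B.
Proof.
move=> /compact_bounded [M0 [_ hM0]]; exists (`|M0| + 1) => [|m Sm i j].
  by rewrite addr_ge0.
apply: le_trans (mx_entry_le_norm _ i j) _.
by apply: hM0 => //; rewrite (le_lt_trans (ler_norm M0)) // ltrDl.
Qed.

Lemma trmx_norm (R : realType) m n (A : 'M[R]_(m, n)) : `|A^T| = `|A|.
Proof.
have le_tr p q (C : 'M[R]_(p, q)) : `|C^T| <= `|C|.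
  rewrite [leLHS]/Num.norm /= mx_normrE; apply: bigmax_le => // ij _.
  by rewrite mxE mx_entry_le_norm.
by apply/eqP; rewrite eq_le le_tr -{1}(trmxK A) le_tr.
Qed.

Lemma trmx_continuous (R : realType) m n : continuous (@trmx R m n).
Proof.
move=> A s /= /(nbhs_ballP (A^T)) [e e0 es].
apply/nbhs_ballP; exists e => // C AC; apply: es.
by move: AC; rewrite -!ball_normE /ball_ /= -linearB /= trmx_norm.
Qed.

(* [bounded_closed_compact] is only available for row vectors. *)
Lemma compact_orthK_sphere (R : realType) n :
  compact [set u : 'cV[R]_n | orthK u /\ `|u| = 1].
Proof.
pose A := [set v : 'rV[R]_n | (forall i, 0 <= v ord0 i) /\ `|v| = 1].
have -> : [set u : 'cV[R]_n | orthK u /\ `|u| = 1] = trmx @` A.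
  apply/seteqP; split => [u [uK u1]|_ [v [v0 v1] <-]].
    exists u^T; last exact: trmxK.
    by split; [move=> i; rewrite mxE; exact: uK | rewrite trmx_norm].
  by split; [move=> i; rewrite mxE; exact: v0 | rewrite trmx_norm].
apply: continuous_compact.
  by apply: continuous_subspaceT => v; exact: trmx_continuous.
apply: bounded_closed_compact.
  exists 1; split => // r r1 v [_ vn] /=; move: vn; rewrite /Num.norm /= => ->; exact: ltW.
have -> : A = [set v : 'rV[R]_n | forall i, 0 <= v ord0 i] `&` [set v | `|v| = 1] by [].
apply: closedI; last first.
  apply: (@preimage_closed _ _ (fun v : 'rV[R]_n => `|v|) [set 1]).
    by move=> v _; exact: norm_continuous.
  exact: closed_eq.
have -> : [set v : 'rV[R]_n | forall i, 0 <= v ord0 i] =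
    \bigcap_(i in setT) ((fun v : 'rV[R]_n => v ord0 i) @^-1` [set r | 0 <= r]).
  by apply/seteqP; split => [v hv i _|v hv i]; [exact: hv | exact: hv].
apply: closed_bigI => i _; apply: preimage_closed; last exact: closed_ge.
by move=> v _; exact: coord_continuous.
Qed.

Lemma lipschitz_within_continuous (R : realType) n (w : 'cV[R]_n -> R) (L : R) :
  (forall x y, orthK x -> orthK y -> `|w x - w y| <= L * `|x - y|) ->
  {within @orthK R n, continuous w}.
Proof.
move=> hL; apply/subspace_continuousP => x Kx; apply/cvgrPdist_lt => e e0.
rewrite /prop_near1 /within /= nbhs_simpl /=.
have L1 : 0 < `|L| + 1 by rewrite ltr_wpDl.
apply/nbhs_ballP; exists (e / (`|L| + 1)); first by rewrite /= divr_gt0.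
move=> z; rewrite -ball_normE /= => xz Kz.
rewrite (le_lt_trans (hL _ _ Kx Kz)) // (le_lt_trans (ler_wpM2r _ (ler_norm L))) //.
rewrite (@le_lt_trans _ _ ((`|L| + 1) * `|x - z|)) //; first by rewrite ler_wpM2r // lerDl.
by rewrite mulrC -ltr_pdivlMr.
Qed.

Lemma homogeneous1_0 (R : realType) n (w : 'cV[R]_n -> R) : homogeneous1 w -> w 0 = 0.
Proof.
move=> hw; have := hw 2 0 (ltr0Sn _ 1) (fun i => ltac:(by rewrite mxE)).
by rewrite scaler0 => e; lra.
Qed.

Lemma orthK_normalize (R : realType) n (z : 'cV[R]_n) : orthK z -> z != 0 ->
  [/\ orthK (`|z|^-1 *: z), `| (`|z|^-1 *: z) | = 1 & z = `|z| *: (`|z|^-1 *: z)].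
Proof.
move=> Kz z0; have nz : 0 < `|z| by rewrite normr_gt0.
split.
- by move=> i; rewrite mxE mulr_ge0 // invr_ge0 ltW.
- by rewrite normrZ ger0_norm ?invr_ge0 ?ltW // mulVf // gt_eqF.
- by rewrite scalerA mulfV ?scale1r // gt_eqF.
Qed.

Lemma homogeneous1_le_scale (R : realType) n (w1 w2 : 'cV[R]_n -> R) :
  {within @orthK R n, continuous w1} -> {within @orthK R n, continuous w2} ->
  homogeneous1 w1 -> homogeneous1 w2 -> (forall x, orthK0 x -> 0 < w2 x) ->
  exists2 C, 0 < C & forall z, orthK z -> w1 z <= C * w2 z.
Proof.
move=> c1 c2 h1 h2 p2.
set A := [set u : 'cV[R]_n | orthK u /\ `|u| = 1].
have subA : A `<=` @orthK R n by move=> u [].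
have [A0|A0] := pselect (A !=set0); last first.
  exists 1 => // z Kz; have [->|z0] := eqVneq z 0; first by rewrite !homogeneous1_0 // mulr0.
  by exfalso; apply: A0; have [K' n1 _] := orthK_normalize Kz z0; exists (`|z|^-1 *: z).
have [m1 /set_mem m1A w1_max] :=
  compact_EVT_max A0 (@compact_orthK_sphere R n) (continuous_subspaceW subA c1).
have [m2 /set_mem [m2K m2n] w2_min] :=
  compact_EVT_min A0 (@compact_orthK_sphere R n) (continuous_subspaceW subA c2).
have w2m2 : 0 < w2 m2.
  apply: p2; split => //; apply/eqP => m20.
  by move: m2n; rewrite m20 normr0 => /eqP; rewrite eq_sym oner_eq0.
exists ((`|w1 m1| + 1) / w2 m2); first by rewrite divr_gt0 // ltr_wpDl.
move=> z Kz; have [->|z0] := eqVneq z 0; first by rewrite !homogeneous1_0 // mulr0.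
have [uK un ze] := orthK_normalize Kz z0; set u := `|z|^-1 *: z in uK un ze.
have uA : u \in A by apply/mem_set.
have nz : 0 < `|z| by rewrite normr_gt0.
rewrite ze h1 // h2 // mulrCA ler_pM2l // mulrAC ler_pdivlMr //.
have := w1_max _ uA; have := w2_min _ uA; have := ler_norm (w1 m1).
move=> *; apply: (@le_trans _ _ ((`|w1 m1| + 1) * w2 m2)).
  by apply: ler_wpM2r; [exact: ltW | lra].
by apply: ler_wpM2l => //; rewrite addr_ge0.
Qed.

Lemma lipschitz_ratio_near (R : realType) n (w : 'cV[R]_n -> R) (L : R) x y :
  (forall x y, orthK x -> orthK y -> `|w x - w y| <= L * `|x - y|) ->
  orthK x -> orthK y -> 0 < w x -> `|x - y| < w x / (2 * (`|L| + 1)) ->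
  w x / 2 <= w y <= 2 * w x.
Proof.
move=> w_lip Kx Ky wx xy; have L1 : 0 < `|L| + 1 by rewrite ltr_wpDl.
have : `|w x - w y| <= w x / 2.
  apply: le_trans (w_lip _ _ Kx Ky) _.
  apply: le_trans (_ : _ <= (`|L| + 1) * `|x - y|) _.
    by rewrite ler_wpM2r // (le_trans (ler_norm L)) // lerDl.
  rewrite -ler_pdivlMl // mulrC -mulrA [X in _ <= X]mulrC -mulrA.
  have -> : 2^-1 * ((`|L| + 1)^-1 * w x) = w x / (2 * (`|L| + 1)) by rewrite invfM; ring.
  exact: ltW.
by rewrite ler_norml => /andP[? ?]; apply/andP; split; lra.
Qed.

Section ValueBounds.
Variables (R : realType) (n : nat) (S : set 'M[R]_n) (lam B C1 C2 L : R)
  (v0 vb : 'cV[R]_n -> R).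
Hypothesis S_metzler : forall m, S m -> metzler m.
Hypothesis S_bounded : forall m, S m -> forall i j, `|m i j| <= B.
Hypothesis B_ge0 : 0 <= B.
Hypothesis C1_gt0 : 0 < C1.
Hypothesis C2_gt0 : 0 < C2.
Hypothesis v0_le : forall z, orthK z -> v0 z <= C1 * vb z.
Hypothesis vb_le : forall z, orthK z -> vb z <= C2 * v0 z.
Hypothesis vb_gt0 : forall x, orthK0 x -> 0 < vb x.
Hypothesis vb_lip : forall x y, orthK x -> orthK y -> `|vb x - vb y| <= L * `|x - y|.
Hypothesis vb_eigen : forall t x, 0 <= t -> orthK x ->
  expR (lam * t) * vb x = value_fn S vb t x.

Lemma value_fn_bounds x t : orthK0 x -> 0 <= t ->
  expR (lam * t) * vb x / C2 <= value_fn S v0 t x <= C1 * (expR (lam * t) * vb x).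
Proof.
move=> /[dup] hx [Kx _] t0.
pose T := [set y | exists M, control S t M /\ trajectory M t x y].
have TK y : T y -> orthK (y t).
  move=> [M [[MS _] tr]]; apply: (trajectory_orthK B_ge0 _ _ tr Kx); rewrite ?t0 ?lexx //.
  - by move=> s /MS; exact: S_metzler.
  - by move=> s /MS; exact: S_bounded.
set E := expR (lam * t) * vb x.
have E_gt0 : 0 < E by rewrite mulr_gt0 ?expR_gt0 ?vb_gt0.
have supE : sup [set vb (y t) | y in T] = E by rewrite /E vb_eigen.
have vb_sup : has_sup [set vb (y t) | y in T].
  apply/not_notP => no_sup.
  by move: E_gt0; rewrite -supE sup_out // ltxx.
have [[_ [y0 Ty0 _]] _] := vb_sup.
rewrite /value_fn -/T; apply/andP; split; last first.
  apply: ge_sup => [|_ [y Ty <-]]; first by exists (v0 (y0 t)), y0.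
  rewrite (le_trans (v0_le (TK _ Ty))) // ler_pM2l // -supE.
  by apply: sup_upper_bound => //; exists y.
rewrite ler_pdivrMr // mulrC -supE.
apply: ge_sup => [|_ [y Ty <-]]; first by exists (vb (y0 t)), y0.
rewrite (le_trans (vb_le (TK _ Ty))) // ler_pM2l //.
apply: sup_upper_bound; last by exists y.
split; first by exists (v0 (y0 t)), y0.
exists (C1 * E) => _ [y' Ty' <-].
rewrite (le_trans (v0_le (TK _ Ty'))) // ler_pM2l // -supE.
by apply: sup_upper_bound => //; exists y'.
Qed.

Lemma ln_value_fn_deviation y a b t : orthK0 y -> 0 < a -> a <= vb y <= b -> 0 < t ->
  `|ln (value_fn S v0 t y) / t - lam| <= (`|ln (C1 * b)| + `|ln (a / C2)|) / t.
Proof.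
move=> hy a0 /andP[ay yb] t0.
have /andP[lo hi] := value_fn_bounds hy (ltW t0).
set V := value_fn S v0 t y in lo hi *; set E := expR (lam * t) in lo hi.
have E0 : 0 < E by exact: expR_gt0.
have b0 : 0 < b by apply: lt_le_trans a0 (le_trans ay yb).
have V0 : 0 < V by apply: lt_le_trans lo; rewrite divr_gt0 // mulr_gt0 // (lt_le_trans a0).
have up : ln V <= ln (C1 * b) + lam * t.
  rewrite -[lam * t]expRK -lnM ?posrE ?mulr_gt0 // ler_ln ?posrE ?mulr_gt0 //.
  by rewrite (le_trans hi) // -mulrA ler_pM2l // [E * _]mulrC ler_pM2r.
have dn : ln (a / C2) + lam * t <= ln V.
  rewrite -[lam * t]expRK -lnM ?posrE ?mulr_gt0 ?divr_gt0 ?invr_gt0 //.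
  rewrite ler_ln ?posrE ?mulr_gt0 ?divr_gt0 ?invr_gt0 //.
  by rewrite (le_trans _ lo) // mulrAC [E * _]mulrC ler_pM2r ?invr_gt0 // ler_pM2r.
have -> : ln V / t - lam = (ln V - lam * t) / t by field; rewrite gt_eqF.
rewrite normrM [`|t^-1|]gtr0_norm ?invr_gt0 // ler_pM2r ?invr_gt0 //.
have := ler_norm (ln (C1 * b)); have := ler_norm (- ln (a / C2)); rewrite normrN.
have := normr_ge0 (ln (C1 * b)); have := normr_ge0 (ln (a / C2)).
by rewrite ler_norml => *; apply/andP; split; lra.
Qed.

Lemma ln_value_fn_near x : orthK0 x -> exists2 r, 0 < r & forall eps, 0 < eps ->
  exists2 T, 0 <= T & forall t, T < t -> forall y, ball x r y -> orthK0 y ->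
    `|ln (value_fn S v0 t y) / t - lam| < eps.
Proof.
move=> /[dup] hx [Kx _]; have vx := vb_gt0 hx.
exists (vb x / (2 * (`|L| + 1))); first by rewrite divr_gt0 // mulr_gt0 // ltr_wpDl.
move=> eps eps_gt0.
set D := `|ln (C1 * (2 * vb x))| + `|ln (vb x / 2 / C2)|.
have D_ge0 : 0 <= D by rewrite addr_ge0.
exists (D / eps) => [|t tT y]; first by rewrite divr_ge0 // ltW.
rewrite -ball_normE /= => xy /[dup] hy [Ky _].
have t_gt0 : 0 < t by apply: le_lt_trans tT; rewrite divr_ge0 // ltW.
have vx2 : 0 < vb x / 2 by rewrite divr_gt0.
apply: le_lt_trans (ln_value_fn_deviation hy vx2 (lipschitz_ratio_near vb_lip Kx Ky vx xy) t_gt0) _.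
by move: tT; rewrite !ltr_pdivrMr // mulrC.
Qed.

End ValueBounds.

Unset Implicit Arguments.
Set Strict Implicit.

Theorem corollary1 (R : realType) (n : nat) (S : set 'M[R]_n)
  (cS : compact S) (convS : convex_mxset S)
  (irrS : forall m, S m -> metzler m /\ irreducible_mx m)
  (lam : R) (hlam : is_lambda S lam)
  (v0 : 'cV[R]_n -> R)
  (v0c : {within @orthK R n, continuous v0})
  (v0nn : forall x, orthK x -> 0 <= v0 x)
  (v0h : homogeneous1 v0)
  (v0p : forall x, orthK0 x -> 0 < v0 x) :
  (forall x, orthK0 x ->
     (ln (value_fn S v0 t x) / t) @[t --> +oo] --> lam) /\
  (forall x, orthK0 x -> exists U, nbhs x U /\
     forall eps : R, 0 < eps -> exists T : R, forall t, T < t ->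
       forall y, U y -> orthK0 y ->
         `|ln (value_fn S v0 t y) / t - lam| < eps).
Proof.
case: hlam => vb [_ vb_h vb_gt0 [L vb_lip] vb_eigen].
have [B B_ge0 S_bounded] := compact_mx_entry_bounded cS.
have S_metzler m : S m -> metzler m by move=> /irrS[].
have vb_c := lipschitz_within_continuous vb_lip.
have [C1 C1_gt0 v0_le] := homogeneous1_le_scale v0c vb_c v0h vb_h vb_gt0.
have [C2 C2_gt0 vb_le] := homogeneous1_le_scale vb_c v0c vb_h v0h v0p.
have near := ln_value_fn_near S_metzler S_bounded B_ge0 C1_gt0 C2_gt0 v0_le vb_le
  vb_gt0 vb_lip vb_eigen.
split=> x hx; have [r r_gt0 near_x] := near x hx.
- apply/cvgrPdist_lt => e e_gt0; have [T _ hT] := near_x e e_gt0.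
  exists T; split; first exact: num_real.
  by move=> t tT; rewrite distrC; apply: hT => //; exact: ballxx.
- exists (ball x r); split; first exact: nbhsx_ballx.
  by move=> eps eps_gt0; have [T _ hT] := near_x eps eps_gt0; exists T.
Qed.
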